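(* Let $x\in S\cap\mathbb{R}^n$ and $J\subset[n]$. Then $J$ is a feasible descent direction at $x$ (i.e. $x+\delta\chi_J\in S$ and $f(x+\delta\chi_J)<f(x)$ for all $0<\delta<\epsilon(x)$) if and only if: (1) for any $j\in J$ and any $w_i\in\mathcal{N}^-_W(j,x)$ there exists $j'\in\mathcal{N}^-_V(w_i,x)$ with $j'\in J$; and (2) $\mu(J,x)<0$.
   Context: $\mathbb{R}_{\max}=\mathbb{R}\cup\{-\infty\}$, $\chi_J$ the indicator vector of $J$. Data: $A^\pm=(a^\pm_{i,j})\in\mathbb{R}_{\max}^{m\times n}$, $C=(c_{k,j})\in\mathbb{R}_{\max}^{p\times n}$, $\mu^+\in\mathbb{Z}_{\ge0}^p$, $\mu^-\in\mathbb{Z}_{\ge0}^n$; $A=(a_{i,j})$, $a_{i,j}=\max(a^+_{i,j},a^-_{i,j})$. $f(x)=\sum_k\mu^+_k\max_j(c_{k,j}+x_j)-\sum_j\mu^-_jx_j$; $S=\{x:\max_j(a^+_{i,j}+x_j)\ge\max_j(a^-_{i,j}+x_j)\ \forall i\in[m]\}$. Standing assumptions: each row of $A$ and $C$ has a finite entry; $\sum_k\mu^+_k=\sum_j\mu^-_j$; the undirected graph on $\{u_k\}\cup[n]\cup\{w_i\}$ with edges $\{u_k,j\}$ ($c_{k,j}\ne-\infty$), $\{w_i,j\}$ ($a_{i,j}\ne-\infty$) is connected. $\epsilon(x)$ is the smallest positive value among $|(a_{i,j_1}+x_{j_1})-(a_{i,j_2}+x_{j_2})|$ and $|(c_{k,j_1}+x_{j_1})-(c_{k,j_2}+x_{j_2})|$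 over all $i,k,j_1,j_2$. Tangent digraph $\mathcal{G}(x)$ on $U=\{u_1..u_p\}$, $V=[n]$, $W=\{w_1..w_m\}$ with edges $E_1(x)=\{(u_k,j):\max_{j'}(c_{k,j'}+x_{j'})=c_{k,j}+x_j\}$, $E_2(x)=\{(w_i,j):\max_{j'}(a_{i,j'}+x_{j'})=a^-_{i,j}+x_j\}$, $E_3(x)=\{(j,w_i):\max_{j'}(a_{i,j'}+x_{j'})=a^+_{i,j}+x_j\}$. $\mathcal{N}_U(J,x)=\{u_k:(u_k,j)\in E_1(x)\text{ for some }j\in J\}$, $\mathcal{N}^-_W(j,x)=\{w_i:(w_i,j)\in E_2(x)\}$, $\mathcal{N}^-_V(w_i,x)=\{j:(j,w_i)\in E_3(x)\}$, and $\mu(J,x)=\sum_{u_k\in\mathcal{N}_U(J,x)}\mu^+_k-\sum_{j\in J}\mu^-_j$. *)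

(* Tropical (max-plus) data: an element of R_max = R ∪ {-oo}
   is represented as [option R], with [None] standing for -oo. *)
From HB Require Import structures.
From mathcomp Require Import all_boot all_order all_algebra.
Set Implicit Arguments. Unset Strict Implicit. Unset Printing Implicit Defensive.
Import Order.TTheory GRing.Theory Num.Theory.
Local Open Scope ring_scope.

Section Tropical.
Variable R : realFieldType.

Definition ole (a b : option R) : bool :=
  match a, b with
  | None, _ => true
  | Some _, None => false
  | Some a, Some b => a <= b
  end.

Definition omax (a b : option R) : option R := if ole a b then b else a.

Definition addv (a : option R) (t : R) : option R := omap (fun a => a + t) a.

Variables m n p : nat.

Definition rowmax (r : 'I_n -> option R) (x : 'I_n -> R) : option R :=
  \big[omax/None]_(j < n) addv (r j) (x j).

Variables (Ap Am : 'I_m -> 'I_n -> option R) (C : 'I_p -> 'I_n -> option R)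
          (mup : 'I_p -> nat) (mum : 'I_n -> nat).

Definition Amat (i : 'I_m) (j : 'I_n) : option R := omax (Ap i j) (Am i j).

(* the objective f (each row of C has a finite entry, so the maxima are
   finite; [odflt 0] is only used to extract the real value) *)
Definition fobj (x : 'I_n -> R) : R :=
  \sum_(k < p) (mup k)%:R * odflt 0 (rowmax (C k) x) - \sum_(j < n) (mum j)%:R * x j.

Definition inS (x : 'I_n -> R) : Prop :=
  forall i : 'I_m, ole (rowmax (Am i) x) (rowmax (Ap i) x).

(* "0 < delta < eps(x)" unfolded: delta is below every positive value among the
   finite differences |(a_{i,j1}+x_{j1}) - (a_{i,j2}+x_{j2})| and
   |(c_{k,j1}+x_{j1}) - (c_{k,j2}+x_{j2})| (eps(x) = +oo if there is none). *)
Definition below_eps (x : 'I_n -> R) (delta : R) : Prop :=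
  (forall (i : 'I_m) (j1 j2 : 'I_n) (a1 a2 : R),
      Amat i j1 = Some a1 -> Amat i j2 = Some a2 ->
      0 < `|(a1 + x j1) - (a2 + x j2)| -> delta < `|(a1 + x j1) - (a2 + x j2)|) /\
  (forall (k : 'I_p) (j1 j2 : 'I_n) (c1 c2 : R),
      C k j1 = Some c1 -> C k j2 = Some c2 ->
      0 < `|(c1 + x j1) - (c2 + x j2)| -> delta < `|(c1 + x j1) - (c2 + x j2)|).

Definition shift (x : 'I_n -> R) (J : {set 'I_n}) (delta : R) : 'I_n -> R :=
  fun j => x j + (if j \in J then delta else 0).

Definition feasible_descent (x : 'I_n -> R) (J : {set 'I_n}) : Prop :=
  forall delta : R, 0 < delta -> below_eps x delta ->
    inS (shift x J delta) /\ fobj (shift x J delta) < fobj x.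

Definition E1 (x : 'I_n -> R) (k : 'I_p) (j : 'I_n) : bool :=
  rowmax (C k) x == addv (C k j) (x j).
Definition E2 (x : 'I_n -> R) (i : 'I_m) (j : 'I_n) : bool :=
  rowmax (Amat i) x == addv (Am i j) (x j).
Definition E3 (x : 'I_n -> R) (j : 'I_n) (i : 'I_m) : bool :=
  rowmax (Amat i) x == addv (Ap i j) (x j).

Definition NU (J : {set 'I_n}) (x : 'I_n -> R) : {set 'I_p} :=
  [set k | [exists j in J, E1 x k j]].
Definition NW (j : 'I_n) (x : 'I_n -> R) : {set 'I_m} := [set i | E2 x i j].
Definition NV (i : 'I_m) (x : 'I_n -> R) : {set 'I_n} := [set j | E3 x j i].

Definition muJ (J : {set 'I_n}) (x : 'I_n -> R) : int :=
  \sum_(k in NU J x) (mup k)%:Z - \sum_(j in J) (mum j)%:Z.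

(* the undirected graph on U ∪ V ∪ W, vertices u_k = inl (inl k),
   j = inl (inr j), w_i = inr i *)
Definition vert := ('I_p + 'I_n + 'I_m)%type.
Definition adj : rel vert := fun u v =>
  match u, v with
  | inl (inl k), inl (inr j) => C k j != None
  | inl (inr j), inl (inl k) => C k j != None
  | inr i, inl (inr j) => Amat i j != None
  | inl (inr j), inr i => Amat i j != None
  | _, _ => false
  end.
Definition graph_connected : Prop := forall u v : vert, connect adj u v.

End Tropical.

(* For 0 < d < eps(x) each row maximum at x + d chi_J moves rigidly: non-maximal terms
   lie at least eps(x) below the maximum, so the maximum rises by exactly d if it is
   attained at an index of J and stays put otherwise.  Summing over the rows of C gives
   f(x + d chi_J) = f(x) + d mu(J,x), hence condition (2).  In a row i of A the A^- side
   rises exactly when w_i is in N^-_W(j,x) for some j in J, and feasibility then forces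
   the A^+ side to rise too, i.e. some j' in N^-_V(w_i,x) lies in J; this is (1). *)

From Pilot Require Import Defs.
From HB Require Import structures.
From mathcomp Require Import all_boot all_order all_algebra.
From mathcomp Require Import lra.
Set Implicit Arguments. Unset Strict Implicit. Unset Printing Implicit Defensive.
Import Order.TTheory GRing.Theory Num.Theory.
Local Open Scope ring_scope.

Section MaxPlusOrder.
Variable R : realFieldType.
Implicit Types a b c : option R.

Lemma ole_refl a : ole a a.
Proof. by case: a => //= a; rewrite lexx. Qed.

Lemma ole_trans a b c : ole a b -> ole b c -> ole a c.
Proof. by case: a b c => [a|] [b|] [c|] //=; apply: le_trans. Qed.

Lemma ole_total a b : ole a b || ole b a.
Proof. by case: a b => [a|] [b|] //=; apply: le_total. Qed.

Lemma ole_anti a b : ole a b -> ole b a -> a = b.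
Proof. by case: a b => [a|] [b|] //= h1 h2; rewrite (@le_anti _ _ a b) ?h1. Qed.

Lemma ole_None a : ole a None -> a = None.
Proof. by case: a. Qed.

Lemma omax_ubl a b : ole a (omax a b).
Proof. by rewrite /omax; case: ifP => // _; apply: ole_refl. Qed.

Lemma omax_ubr a b : ole b (omax a b).
Proof.
by rewrite /omax; case: ifP => // h; [apply: ole_refl | move: (ole_total a b); rewrite h].
Qed.

Lemma omax_lub a b c : ole a c -> ole b c -> ole (omax a b) c.
Proof. by rewrite /omax; case: ifP. Qed.

Lemma omax_idPr a b : ole a b -> omax a b = b.
Proof. by rewrite /omax => ->. Qed.

Lemma addv_ole a b t : ole a b -> ole (Defs.addv a t) (Defs.addv b t).
Proof. by case: a b => [a|] [b|] //=; rewrite lerD2r. Qed.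

Lemma addv_omax a b t :
  Defs.addv (omax a b) t = omax (Defs.addv a t) (Defs.addv b t).
Proof. by case: a b => [a|] [b|] //=; rewrite /omax /= lerD2r; case: ifP. Qed.

End MaxPlusOrder.

Section RowMax.
Variables (R : realFieldType) (n : nat).
Implicit Types (r : 'I_n -> option R) (x : 'I_n -> R) (J : {set 'I_n}).

(* [below_eps] is exactly this condition for every row of [Amat] and of [C]. *)
Definition row_sep r x (d : R) : Prop :=
  forall (j1 j2 : 'I_n) (a1 a2 : R), r j1 = Some a1 -> r j2 = Some a2 ->
    0 < `|(a1 + x j1) - (a2 + x j2)| -> d < `|(a1 + x j1) - (a2 + x j2)|.

Lemma row_sep_le r x d d' : d' <= d -> row_sep r x d -> row_sep r x d'.
Proof. by move=> le_d' sep j1 j2 a1 a2 h1 h2 /(sep _ _ _ _ h1 h2); apply: le_lt_trans. Qed.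

Lemma rowmax_ub r x j : ole (Defs.addv (r j) (x j)) (rowmax r x).
Proof.
rewrite /rowmax; elim: (index_enum _) (mem_index_enum j) => [|i s IH] //.
rewrite big_cons in_cons => /predU1P [<- | /IH]; first exact: omax_ubl.
by move/ole_trans; apply; apply: omax_ubr.
Qed.

Lemma rowmax_lub r x c :
  (forall j, ole (Defs.addv (r j) (x j)) c) -> ole (rowmax r x) c.
Proof.
move=> ub; rewrite /rowmax; apply: (big_ind (fun u => ole u c)) => //.
by move=> u v; apply: omax_lub.
Qed.

Lemma rowmax_attained r x :
  rowmax r x = None \/ exists j, rowmax r x = Defs.addv (r j) (x j).
Proof.
rewrite {1}/rowmax; apply: (big_ind (fun u => u = None \/ exists j, u = Defs.addv (r j) (x j))).
- by left.
- by move=> u v; rewrite /omax; case: ifP.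
- by move=> j _; right; exists j.
Qed.

Lemma rowmax_Some r x j a : r j = Some a -> exists M, rowmax r x = Some M.
Proof.
move=> rj; have := rowmax_ub r x j; rewrite rj.
by case: (rowmax r x) => // M; exists M.
Qed.

Lemma rowmax_homo r x y : (forall j, x j <= y j) -> ole (rowmax r x) (rowmax r y).
Proof.
move=> le_xy; apply: rowmax_lub => j; apply: ole_trans (rowmax_ub r y j).
by case: (r j) => //= a; rewrite lerD2l.
Qed.

Lemma rowmax_homo_row r1 r2 x :
  (forall j, ole (r1 j) (r2 j)) -> ole (rowmax r1 x) (rowmax r2 x).
Proof.
by move=> le_r; apply: rowmax_lub => j; apply: ole_trans (rowmax_ub r2 x j); apply: addv_ole.
Qed.

Lemma shift_ge x J d : 0 <= d -> forall j, x j <= shift x J d j.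
Proof. by move=> d_ge0 j; rewrite /shift lerDl; case: ifP. Qed.

Lemma rowmax_gap r x d M : row_sep r x d -> rowmax r x = Some M ->
  forall j a, r j = Some a -> a + x j = M \/ a + x j + d < M.
Proof.
move=> sep rM j a rj.
have [|[j0]] := rowmax_attained r x; rewrite rM // => att.
case rj0: (r j0) att => [b|] //= [bM].
have := rowmax_ub r x j; rewrite rM rj /= => le_aM.
have [-> | ne_aM] := eqVneq (a + x j) M; [by left | right].
have lt_aM : a + x j < M by rewrite lt_neqAle ne_aM.
have := sep j0 j b a rj0 rj; rewrite -bM ger0_norm ?subr_ge0 ?subr_gt0 ?ltW //.
by move=> /(_ lt_aM); lra.
Qed.

Lemma rowmax_shift r x J d M : 0 < d -> row_sep r x d -> rowmax r x = Some M ->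
  rowmax r (shift x J d) =
    Some (M + if [exists j in J, rowmax r x == Defs.addv (r j) (x j)] then d else 0).
Proof.
move=> d_gt0 sep rM; have gap := rowmax_gap sep rM.
apply: ole_anti.
  apply: rowmax_lub => j; rewrite /shift.
  case rj: (r j) => [a|] //=; case: (gap j a rj) => [aM | ?]; last by do 2 case: ifP => _; lra.
  case: ifP => [jJ | _]; last by case: ifP => _; lra.
  suff -> : [exists j in J, rowmax r x == Defs.addv (r j) (x j)] by lra.
  by apply/existsP; exists j; rewrite jJ rM rj /= aM.
case: ifP => [/existsP [j /andP [jJ /eqP]] | _].
  rewrite rM => att; apply: ole_trans (rowmax_ub _ _ j).
  by rewrite /shift jJ; case: (r j) att => //= a [->]; rewrite addrA lexx.
rewrite addr0 -rM; apply: rowmax_homo; apply: shift_ge; exact: ltW.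
Qed.

End RowMax.

Lemma exists_pos_below (R : realFieldType) (T : finType) (F : T -> R) :
  exists2 e : R, 0 < e & forall t, 0 < F t -> e < F t.
Proof.
pose e := \big[Order.min/1]_(t | 0 < F t) F t.
have e_gt0 : 0 < e by apply: (big_ind (fun u => 0 < u)) => // u v; rewrite lt_min => -> ->.
exists (e / 2) => [|t Ft_gt0]; first by rewrite divr_gt0.
have : e <= F t by apply: (bigmin_le_cond _ (P := fun t => 0 < F t)).
lra.
Qed.

Lemma exists_row_sep (R : realFieldType) (I : finType) (n : nat)
    (A : I -> 'I_n -> option R) (x : 'I_n -> R) :
  exists2 d : R, 0 < d & forall i, row_sep (A i) x d.
Proof.
pose F (t : I * 'I_n * 'I_n) : R :=
  if (A t.1.1 t.1.2, A t.1.1 t.2) is (Some a1, Some a2)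
  then `|(a1 + x t.1.2) - (a2 + x t.2)| else 0.
have [d d_gt0 below] := exists_pos_below F.
by exists d => // i j1 j2 a1 a2 h1 h2; have := below (i, j1, j2); rewrite /F /= h1 h2.
Qed.

Section Objective.
Variables (R : realFieldType) (n p : nat) (C : 'I_p -> 'I_n -> option R).
Variables (mup : 'I_p -> nat) (mum : 'I_n -> nat).
Hypothesis C_finite : forall k, exists j, C k j != None.

Lemma rowmaxC_shift x J d k : 0 < d -> row_sep (C k) x d ->
  odflt 0 (rowmax (C k) (shift x J d)) =
    odflt 0 (rowmax (C k) x) + (if k \in NU C J x then d else 0).
Proof.
move=> d_gt0 sep; have [j] := C_finite k.
case Ckj: (C k j) => [a|] // _; have [M rM] := rowmax_Some x Ckj.
by rewrite (rowmax_shift J d_gt0 sep rM) inE /E1 rM.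
Qed.

Lemma fobj_shift x J d : 0 < d -> (forall k, row_sep (C k) x d) ->
  fobj C mup mum (shift x J d) = fobj C mup mum x + d * (muJ C mup mum J x)%:~R.
Proof.
move=> d_gt0 sep; rewrite /fobj /muJ intrB !rmorph_sum /=.
under eq_bigr => k _ do rewrite (rowmaxC_shift J d_gt0 (sep k)) mulrDr.
under [X in _ - X]eq_bigr => j _ do rewrite /shift mulrDr.
have sum_shift (I : finType) (A : {set I}) (w : I -> nat) :
    \sum_i (w i)%:R * (if i \in A then d else 0) = \sum_(i in A) d * (w i)%:~R.
  by rewrite [RHS]big_mkcond; apply: eq_bigr => i _; case: ifP; rewrite ?mulr0 // mulrC.
by rewrite !big_split /= !sum_shift mulrBr !mulr_sumr; lra.
Qed.

Lemma fobj_shift_lt x J d : 0 < d -> (forall k, row_sep (C k) x d) ->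
  (fobj C mup mum (shift x J d) < fobj C mup mum x) = (muJ C mup mum J x < 0).
Proof. by move=> d_gt0 sep; rewrite fobj_shift // gtrDl pmulr_rlt0 // ltrz0. Qed.

End Objective.

Section Feasibility.
Variables (R : realFieldType) (m n : nat) (Ap Am : 'I_m -> 'I_n -> option R).
Implicit Types (x : 'I_n -> R) (J : {set 'I_n}).

Lemma Ap_le_rowmax x i j :
  ole (Defs.addv (Ap i j) (x j)) (rowmax (Amat Ap Am i) x).
Proof. exact: ole_trans (addv_ole _ (omax_ubl _ _)) (rowmax_ub _ x j). Qed.

Lemma rowmax_Amat x i : ole (rowmax (Am i) x) (rowmax (Ap i) x) ->
  rowmax (Amat Ap Am i) x = rowmax (Ap i) x.
Proof.
move=> feas; apply: ole_anti; last by apply: rowmax_homo_row => j; apply: omax_ubl.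
apply: rowmax_lub => j; rewrite addv_omax; apply: omax_lub; first exact: rowmax_ub.
exact: ole_trans (rowmax_ub _ x j) feas.
Qed.

Lemma shift_feasible_row_NV x J d i j : 0 < d ->
  ole (rowmax (Am i) (shift x J d)) (rowmax (Ap i) (shift x J d)) ->
  j \in J -> i \in NW Ap Am j x -> exists2 j', j' \in NV Ap Am i x & j' \in J.
Proof.
move=> d_gt0 feas jJ; rewrite inE /E2.
case Amij: (Am i j) => [a|] /eqP att; last first.
  exists j; rewrite // inE /E3 att.
  by have := Ap_le_rowmax x i j; rewrite att => /ole_None ->.
have up : ole (Some (a + x j + d)) (rowmax (Ap i) (shift x J d)).
  apply: ole_trans feas; apply: ole_trans (rowmax_ub _ _ j).
  by rewrite /shift jJ Amij /= addrA lexx.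
case: (rowmax_attained (Ap i) (shift x J d)) up => [-> // | [j' ->]].
have := Ap_le_rowmax x i j'; rewrite att /shift.
case Apij': (Ap i j') => [c|] //= le_c; case: ifP => j'J ?; last by lra.
by exists j'; rewrite // inE /E3 att Apij' /=; apply/eqP; congr Some; lra.
Qed.

Lemma shift_feasible_row x J d i : 0 < d -> row_sep (Amat Ap Am i) x d ->
  ole (rowmax (Am i) x) (rowmax (Ap i) x) ->
  (forall j, j \in J -> i \in NW Ap Am j x -> exists2 j', j' \in NV Ap Am i x & j' \in J) ->
  ole (rowmax (Am i) (shift x J d)) (rowmax (Ap i) (shift x J d)).
Proof.
move=> d_gt0 sep feas NV_J.
have base : ole (rowmax (Amat Ap Am i) x) (rowmax (Ap i) (shift x J d)).
  by rewrite rowmax_Amat //; apply/rowmax_homo/shift_ge/ltW.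
apply: rowmax_lub => j.
have [le_Ap | /omax_idPr Amij_max] := orP (ole_total (Am i j) (Ap i j)).
  exact: ole_trans (addv_ole _ le_Ap) (rowmax_ub _ _ j).
case Amij: (Am i j) => [a|] //.
have Amatij : Amat Ap Am i j = Some a by rewrite /Amat Amij_max.
have [M rM] := rowmax_Some x Amatij; rewrite rM in base.
case: (rowmax_gap sep rM Amatij) => [aM | gap]; last first.
  by apply: ole_trans base; rewrite /shift /=; case: ifP => _; lra.
case: (boolP (j \in J)) => jJ; last first.
  by apply: ole_trans base; rewrite /shift (negbTE jJ) /=; lra.
have iNW : i \in NW Ap Am j x by rewrite inE /E2 rM Amij /= aM.
have [j'] := NV_J j jJ iNW.
rewrite inE /E3 rM; case Apij': (Ap i j') => [c|] //= /eqP [cM] j'J.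
have := rowmax_ub (Ap i) (shift x J d) j'; rewrite Apij'.
by case: (rowmax _ _) => //= b; rewrite /shift j'J jJ; lra.
Qed.

Lemma shift_inS_iff x J d : 0 < d -> (forall i, row_sep (Amat Ap Am i) x d) ->
  inS Ap Am x ->
  inS Ap Am (shift x J d) <->
  (forall j, j \in J -> forall i, i \in NW Ap Am j x ->
     exists2 j', j' \in NV Ap Am i x & j' \in J).
Proof.
move=> d_gt0 sep hx; split=> [feas j jJ i | NV_J i].
  exact: shift_feasible_row_NV (feas i) jJ.
by apply: shift_feasible_row => // j jJ; apply: NV_J.
Qed.

End Feasibility.

Lemma exists_below_eps (R : realFieldType) (m n p : nat)
    (Ap Am : 'I_m -> 'I_n -> option R) (C : 'I_p -> 'I_n -> option R) (x : 'I_n -> R) :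
  exists2 d : R, 0 < d & below_eps Ap Am C x d.
Proof.
have [d1 d1_gt0 sepA] := exists_row_sep (Amat Ap Am) x.
have [d2 d2_gt0 sepC] := exists_row_sep C x.
exists (Order.min d1 d2); first by rewrite lt_min d1_gt0.
by split=> [i|k]; [apply: row_sep_le (sepA i) | apply: row_sep_le (sepC k)];
  rewrite ge_min lexx ?orbT.
Qed.

(* The characterization does not use [hA], [hmu] or [hconn]. *)
Theorem theorem4p1 (R : realFieldType) (m n p : nat)
  (Ap Am : 'I_m -> 'I_n -> option R) (C : 'I_p -> 'I_n -> option R)
  (mup : 'I_p -> nat) (mum : 'I_n -> nat)
  (hA : forall i : 'I_m, exists j : 'I_n, Amat Ap Am i j != None)
  (hC : forall k : 'I_p, exists j : 'I_n, C k j != None)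
  (hmu : (\sum_(k < p) mup k = \sum_(j < n) mum j)%N)
  (hconn : graph_connected Ap Am C)
  (x : 'I_n -> R) (hx : inS Ap Am x) (J : {set 'I_n}) :
  feasible_descent Ap Am C mup mum x J <->
  ((forall j : 'I_n, j \in J -> forall i : 'I_m, i \in NW Ap Am j x ->
      exists2 j' : 'I_n, j' \in NV Ap Am i x & j' \in J)
   /\ muJ C mup mum J x < 0).
Proof.
split=> [descent | [NV_J mu_lt0] d d_gt0 [sepA sepC]].
  have [d d_gt0 [sepA sepC]] := exists_below_eps Ap Am C x.
  have [feas f_lt] := descent d d_gt0 (conj sepA sepC).
  split; first exact: (shift_inS_iff J d_gt0 sepA hx).1 feas.
  by rewrite -(fobj_shift_lt mup mum hC J d_gt0 sepC).
split; first exact: (shift_inS_iff J d_gt0 sepA hx).2 NV_J.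
by rewrite (fobj_shift_lt mup mum hC J d_gt0 sepC).
Qed.
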